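(* Let $(X,T)$ be a topological dynamical system, $x_0\in X$, $E\subset X$ a clopen set, and $A=\{n\in\mathbb{N}\colon T^nx_0\in E\}$. Equip $X\times X$ with $T\times T$. Let $x_1\in X$ and let $\nu$ be a Borel probability measure on $X\times X$ such that $(x_0,x_1)$ is generic for $\nu$ along some Følner sequence $\Phi=(\Phi_N)$. Assume there exist $\varepsilon>0$ and a sequence of integers $(m_i)$ with $m_i\to\infty$ such that $T^{m_i}x_0\to x_1$ as $i\to\infty$ and $\nu(T^{-m_i}E\times E)\ge\varepsilon$ for every $i$. Then there exist infinite subsets $B,C\subset\mathbb{N}$ with $B+C\subset A$; moreover one can take $B\subset\{m_i\colon i\ge1\}$ and $C\subset\{\ell\in\mathbb{N}\colon T^\ell x_1\in E\}$.
   Context: A topological dynamical system $(X,T)$ is a compact metric space $X$ with a continuous surjection $T\colon X\to X$. Convention: $\mathbb{N}=\{0,1,2,\dots\}$. A Følner sequence is a sequence $\Phi=(\Phi_N)_{N\ge1}$ of intervals of $\mathbb{N}$ whose lengths tend to $\infty$. For a system $(Y,R)$, a point $y\in Y$ and a probability measure $\mu$ on $Y$, $y$ is generic for $\mu$ along $\Phi$ if $\frac{1}{|\Phi_N|}\sum_{n\in\Phi_N}f(R^ny)\to\int f\,d\mu$ as $N\to\infty$ for every continuous $f\colon Y\to\mathbb{C}$. $B+C=\{b+c\colon b\in B,c\in C\}$. *)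

From Stdlib Require Import Reals Lra Lia List Classical ClassicalEpsilon.
Open Scope R_scope.

Definition is_metric {X : Type} (d : X -> X -> R) : Prop :=
  (forall x y, 0 <= d x y) /\ (forall x y, d x y = 0 <-> x = y) /\
  (forall x y, d x y = d y x) /\ (forall x y z, d x z <= d x y + d y z).

Definition converges {X : Type} (d : X -> X -> R) (u : nat -> X) (l : X) : Prop :=
  forall eps, 0 < eps -> exists N, forall n, (N <= n)%nat -> d (u n) l < eps.

Definition seq_compact {X : Type} (d : X -> X -> R) : Prop :=
  forall u : nat -> X, exists phi : nat -> nat,
    (forall n, (phi n < phi (S n))%nat) /\ exists l, converges d (fun n => u (phi n)) l.

Definition continuous_map {X Y : Type} (dX : X -> X -> R) (dY : Y -> Y -> R)
  (f : X -> Y) : Prop :=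
  forall x eps, 0 < eps -> exists delta, 0 < delta /\
    forall y, dX x y < delta -> dY (f x) (f y) < eps.

Definition tds {X : Type} (d : X -> X -> R) (T : X -> X) : Prop :=
  is_metric d /\ seq_compact d /\ continuous_map d d T /\ (forall y, exists x, T x = y).

Definition is_open {X : Type} (d : X -> X -> R) (U : X -> Prop) : Prop :=
  forall x, U x -> exists r, 0 < r /\ forall y, d x y < r -> U y.
Definition is_closed {X : Type} (d : X -> X -> R) (F : X -> Prop) : Prop :=
  is_open d (fun x => ~ F x).
Definition is_clopen {X : Type} (d : X -> X -> R) (E : X -> Prop) : Prop :=
  is_open d E /\ is_closed d E.

(* product space X x X with the max metric (inducing the product topology) *)
Definition dprod {X : Type} (d : X -> X -> R) (p q : X * X) : R :=
  Rmax (d (fst p) (fst q)) (d (snd p) (snd q)).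
Definition Tprod {X : Type} (T : X -> X) (p : X * X) : X * X := (T (fst p), T (snd p)).

Definition dR (a b : R) : R := Rabs (a - b).

Definition sigma_algebra {X : Type} (S : (X -> Prop) -> Prop) : Prop :=
  S (fun _ => True) /\ (forall A, S A -> S (fun x => ~ A x)) /\
  (forall An : nat -> X -> Prop, (forall n, S (An n)) -> S (fun x => exists n, An n x)).

Definition borel {X : Type} (d : X -> X -> R) (A : X -> Prop) : Prop :=
  forall S, sigma_algebra S -> (forall U, is_open d U -> S U) -> S A.

Definition borel_prob_measure {X : Type} (d : X -> X -> R) (mu : (X -> Prop) -> R) : Prop :=
  (forall A, borel d A -> 0 <= mu A) /\ mu (fun _ => True) = 1 /\
  (forall An : nat -> X -> Prop, (forall n, borel d (An n)) ->
     (forall i j x, i <> j -> An i x -> An j x -> False) ->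
     infinite_sum (fun n => mu (An n)) (mu (fun x => exists n, An n x))).

Definition ind {X : Type} (A : X -> Prop) (x : X) : R :=
  if excluded_middle_informative (A x) then 1 else 0.

(* values of integrals of nonnegative Borel simple functions below f *)
Definition simple_lower_sums {X : Type} (d : X -> X -> R) (mu : (X -> Prop) -> R)
  (f : X -> R) (v : R) : Prop :=
  exists l : list (R * (X -> Prop)),
    Forall (fun p => 0 <= fst p /\ borel d (snd p)) l /\
    (forall x, fold_right (fun p acc => fst p * ind (snd p) x + acc) 0 l <= f x) /\
    v = fold_right (fun p acc => fst p * mu (snd p) + acc) 0 l.

Definition is_integral {X : Type} (d : X -> X -> R) (mu : (X -> Prop) -> R)
  (f : X -> R) (I : R) : Prop :=
  exists p q, is_lub (simple_lower_sums d mu (fun x => Rmax (f x) 0)) p /\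
              is_lub (simple_lower_sums d mu (fun x => Rmax (- f x) 0)) q /\ I = p - q.

(* Phi_N = [a N, b N) with length b N - a N -> infinity *)
Definition folner (a b : nat -> nat) : Prop :=
  (forall N, (a N <= b N)%nat) /\
  (forall M, exists N0, forall N, (N0 <= N)%nat -> (M <= b N - a N)%nat).

Definition sum_range (g : nat -> R) (start len : nat) : R :=
  fold_right Rplus 0 (map g (seq start len)).

Definition generic {Y : Type} (dY : Y -> Y -> R) (S : Y -> Y) (y : Y)
  (mu : (Y -> Prop) -> R) (a b : nat -> nat) : Prop :=
  forall f : Y -> R, continuous_map dY dR f ->
    exists I, is_integral dY mu f I /\
      Un_cv (fun N => / INR (b N - a N) * sum_range (fun n => f (Nat.iter n S y)) (a N) (b N - a N)) I.

From Pilot Require Import Defs.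
From Stdlib Require Import Reals Lra Lia List Classical ClassicalEpsilon FunctionalExtensionality PropExtensionality.
Open Scope R_scope.

(* Write A_i = T^{-m_i} E x E.  Since nu(A_i) >= eps for all i, the set L of pairs
   lying in infinitely many A_i has nu(L) >= eps (a limsup / continuity-from-below
   argument).  We then choose pairs (b_n, c_n) = (m_{i_n}, c_n) inductively while
   maintaining a clopen set G_n = A_{i_1} /\ ... /\ A_{i_n} with nu(G_n /\ L) > 0:
   - since G_n /\ L is covered by the A_i with i large, some large i gives
     nu(G_n /\ A_i /\ L) > 0 (countable subadditivity); taking i large also makes
     m_i + c_k in A for the earlier c_k, as T^{m_i} x0 -> x1 and T^{c_k} x1 in E;
   - since (x0, x1) is generic for nu, its orbit enters the clopen set
     G_{n+1} = G_n /\ A_i of positive measure at arbitrarily large times c,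
     which gives b_k + c in A for all k <= n+1 and T^c x1 in E. *)

Lemma set_ext {Y : Type} (A B : Y -> Prop) : (forall x, A x <-> B x) -> A = B.
Proof.
  intro H; apply functional_extensionality; intro x; apply propositional_extensionality; auto.
Qed.

Section BorelSets.
Context {Y : Type} (d : Y -> Y -> R).

Lemma borel_open U : is_open d U -> borel d U.
Proof. intros HU S _ Hopen; exact (Hopen U HU). Qed.

Lemma borel_True : borel d (fun _ => True).
Proof. intros S HS _; exact (proj1 HS). Qed.

Lemma borel_compl A : borel d A -> borel d (fun x => ~ A x).
Proof. intros HA S HS Hopen; apply (proj1 (proj2 HS)), HA; assumption. Qed.

Lemma borel_union (An : nat -> Y -> Prop) :
  (forall n, borel d (An n)) -> borel d (fun x => exists n, An n x).
Proof. intros HA S HS Hopen; apply (proj2 (proj2 HS)); intro n; apply HA; assumption. Qed.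

Lemma borel_False : borel d (fun _ => False).
Proof.
  rewrite (set_ext (fun _ => False) (fun _ => ~ True)) by (intro; tauto).
  apply borel_compl, borel_True.
Qed.

Lemma borel_inter (An : nat -> Y -> Prop) :
  (forall n, borel d (An n)) -> borel d (fun x => forall n, An n x).
Proof.
  intro HA.
  rewrite (set_ext (fun x => forall n, An n x) (fun x => ~ exists n, ~ An n x)).
  - apply borel_compl, borel_union; intro n; apply borel_compl, HA.
  - intro x; split; [intros H [n Hn]; exact (Hn (H n)) | intros H n; apply NNPP; eauto].
Qed.

Lemma borel_or A B : borel d A -> borel d B -> borel d (fun x => A x \/ B x).
Proof.
  intros HA HB.
  rewrite (set_ext (fun x => A x \/ B x)
             (fun x => exists n : nat, match n with 0%nat => A x | S _ => B x end)).
  - apply borel_union; intros [|n]; assumption.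
  - intro x; split; [intros [H|H]; [exists 0%nat | exists 1%nat]; exact H | intros [[|n] H]; auto].
Qed.

Lemma borel_and A B : borel d A -> borel d B -> borel d (fun x => A x /\ B x).
Proof.
  intros HA HB.
  rewrite (set_ext (fun x => A x /\ B x) (fun x => ~ (~ A x \/ ~ B x))) by (intro; tauto).
  apply borel_compl, borel_or; apply borel_compl; assumption.
Qed.

Lemma borel_andP (P : Prop) B : borel d B -> borel d (fun x => P /\ B x).
Proof.
  intro HB; destruct (classic P) as [HP|HP].
  - rewrite (set_ext (fun x => P /\ B x) B) by (intro; tauto); exact HB.
  - rewrite (set_ext (fun x => P /\ B x) (fun _ => False)) by (intro; tauto); exact borel_False.
Qed.

End BorelSets.

Lemma cv_const (c : R) : Un_cv (fun _ => c) c.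
Proof. intros e He; exists 0%nat; intros n _; unfold R_dist; rewrite Rminus_diag, Rabs_R0; lra. Qed.

Lemma cv_le_bound (u : nat -> R) l c : Un_cv u l -> (forall n, u n <= c) -> l <= c.
Proof. intros Hu Hc; exact (Rle_cv_lim Hc Hu (cv_const c)). Qed.

Lemma cv_ge_bound (u : nat -> R) l c : Un_cv u l -> (forall n, c <= u n) -> c <= l.
Proof. intros Hu Hc; exact (Rle_cv_lim Hc (cv_const c) Hu). Qed.

Fixpoint union_upto {Y : Type} (Bn : nat -> Y -> Prop) (n : nat) (x : Y) : Prop :=
  match n with 0%nat => Bn 0%nat x | S k => union_upto Bn k x \/ Bn (S k) x end.

Definition new_part {Y : Type} (Bn : nat -> Y -> Prop) (n : nat) (x : Y) : Prop :=
  match n with 0%nat => Bn 0%nat x | S k => Bn (S k) x /\ ~ union_upto Bn k x end.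

Lemma union_upto_mono {Y : Type} (Bn : nat -> Y -> Prop) k n x :
  (k <= n)%nat -> union_upto Bn k x -> union_upto Bn n x.
Proof. induction 1; simpl; auto. Qed.

Lemma union_upto_intro {Y : Type} (Bn : nat -> Y -> Prop) n x : Bn n x -> union_upto Bn n x.
Proof. destruct n; simpl; auto. Qed.

Lemma new_part_disjoint {Y : Type} (Bn : nat -> Y -> Prop) i j x :
  i <> j -> new_part Bn i x -> new_part Bn j x -> False.
Proof.
  (* the later of the two pieces excludes everything met earlier *)
  assert (Hlt : forall i j, (i < j)%nat -> new_part Bn i x -> new_part Bn j x -> False).
  { intros i' [|j'] Hij Hi Hj; [lia|].
    apply (proj2 Hj), (union_upto_mono Bn i'); [lia|].
    destruct i'; [exact Hi | exact (union_upto_intro Bn _ x (proj1 Hi))]. }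
  intros Hij Hi Hj; destruct (proj1 (Nat.lt_gt_cases i j) Hij); eauto.
Qed.

Lemma union_new_part {Y : Type} (Bn : nat -> Y -> Prop) x :
  (exists n, new_part Bn n x) <-> (exists n, Bn n x).
Proof.
  split.
  - intros [[|n] H]; [exists 0%nat | exists (S n)]; apply H.
  - intros [n Hn]; apply union_upto_intro in Hn; revert Hn; induction n as [|n IH]; simpl.
    + intro H; exists 0%nat; exact H.
    + intros [H|H]; [auto|].
      destruct (classic (union_upto Bn n x)) as [Hu|Hu]; [auto | exists (S n); split; assumption].
Qed.

Lemma union_upto_split {Y : Type} (Bn : nat -> Y -> Prop) n :
  union_upto Bn (S n) = (fun x => union_upto Bn n x \/ new_part Bn (S n) x).
Proof. apply set_ext; intro x; simpl; destruct (classic (union_upto Bn n x)); tauto. Qed.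

Section ProbabilityMeasure.
Context {Y : Type} (d : Y -> Y -> R) (mu : (Y -> Prop) -> R).
Hypothesis Hmu : borel_prob_measure d mu.

Lemma measure_nonneg A : borel d A -> 0 <= mu A.
Proof. apply (proj1 Hmu). Qed.

Lemma measure_empty : mu (fun _ => False) = 0.
Proof.
  pose proof (proj2 (proj2 Hmu) (fun _ _ => False) (fun _ => borel_False d)
                (fun _ _ _ _ H _ => H)) as Hsum.
  rewrite (set_ext (fun x => exists n : nat, False) (fun _ => False)) in Hsum
    by (intro; split; [intros [_ []] | tauto]).
  assert (Hc : 0 <= mu (fun _ => False)) by exact (measure_nonneg _ (borel_False d)).
  set (c := mu (fun _ => False)) in *.
  (* the partial sums (n+2)c, n >= 0, converge to c *)
  assert (Hge : 2 * c <= c).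
  { apply (cv_ge_bound _ _ _ (CV_shift' _ 1 c Hsum)); intro n.
    assert (Hpart : forall k, sum_f_R0 (fun _ => c) k = INR (S k) * c).
    { induction k; simpl sum_f_R0; [simpl; ring | rewrite IHk, !S_INR; ring]. }
    rewrite Hpart, !S_INR, plus_INR.
    pose proof (pos_INR n); simpl; nra. }
  lra.
Qed.

Lemma measure_add2 A B : borel d A -> borel d B -> (forall x, A x -> B x -> False) ->
  mu (fun x => A x \/ B x) = mu A + mu B.
Proof.
  intros HA HB Hdisj.
  set (An := fun n x => match n with 0%nat => A x | 1%nat => B x | _ => False end).
  assert (Hsum : infinite_sum (fun n => mu (An n)) (mu (fun x => exists n, An n x))).
  { apply (proj2 (proj2 Hmu)).
    - intros [|[|n]]; simpl; auto using borel_False.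
    - intros [|[|i]] [|[|j]] x Hij; simpl; try tauto; try lia; eauto. }
  rewrite (set_ext (fun x => exists n, An n x) (fun x => A x \/ B x)) in Hsum.
  2:{ intro x; split; [intros [[|[|n]] H]; simpl in H; tauto
                     | intros [H|H]; [exists 0%nat | exists 1%nat]; exact H]. }
  assert (Hpart : forall n, sum_f_R0 (fun n => mu (An n)) (n + 1) = mu A + mu B).
  { induction n; [reflexivity|].
    replace (S n + 1)%nat with (S (n + 1)) by lia; simpl sum_f_R0 in *.
    rewrite IHn; unfold An; replace (n + 1)%nat with (S n) by lia; rewrite measure_empty; ring. }
  apply Rle_antisym;
    [apply (cv_le_bound _ _ _ (CV_shift' _ 1 _ Hsum)) | apply (cv_ge_bound _ _ _ (CV_shift' _ 1 _ Hsum))];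
    intro n; rewrite Hpart; lra.
Qed.

Lemma measure_mono A B : borel d A -> borel d B -> (forall x, A x -> B x) -> mu A <= mu B.
Proof.
  intros HA HB Hsub.
  rewrite (set_ext B (fun x => A x \/ (B x /\ ~ A x)))
    by (intro x; destruct (classic (A x)); firstorder).
  rewrite measure_add2 by (auto using borel_and, borel_compl; intros x ? [_ ?]; auto).
  pose proof (measure_nonneg _ (borel_and _ _ _ HB (borel_compl _ _ HA))); lra.
Qed.

Lemma measure_compl A : borel d A -> mu (fun x => ~ A x) = 1 - mu A.
Proof.
  intro HA; rewrite <- (proj1 (proj2 Hmu)).
  rewrite (set_ext (fun _ => True) (fun x => A x \/ ~ A x)) by (intro x; split; [intros _; apply classic | auto]).
  rewrite measure_add2 by (auto using borel_compl); ring.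
Qed.

Lemma measure_subadd2 A B : borel d A -> borel d B -> mu (fun x => A x \/ B x) <= mu A + mu B.
Proof.
  intros HA HB.
  rewrite (set_ext (fun x => A x \/ B x) (fun x => A x \/ (B x /\ ~ A x)))
    by (intro x; destruct (classic (A x)); tauto).
  rewrite measure_add2 by (auto using borel_and, borel_compl; intros x ? [_ ?]; auto).
  pose proof (measure_mono _ _ (borel_and _ _ _ HB (borel_compl _ _ HA)) HB (fun x H => proj1 H)); lra.
Qed.

Lemma borel_union_upto (Bn : nat -> Y -> Prop) n :
  (forall k, borel d (Bn k)) -> borel d (union_upto Bn n).
Proof. intro HB; induction n; simpl; auto using borel_or. Qed.

Lemma measure_union_bound (Bn : nat -> Y -> Prop) c :
  (forall k, borel d (Bn k)) -> (forall n, mu (union_upto Bn n) <= c) ->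
  mu (fun x => exists n, Bn n x) <= c.
Proof.
  intros HB Hc.
  assert (Hnew : forall n, borel d (new_part Bn n)).
  { intros [|n]; [apply HB|].
    apply borel_and; [apply HB | apply borel_compl, borel_union_upto, HB]. }
  pose proof (proj2 (proj2 Hmu) _ Hnew (new_part_disjoint Bn)) as Hsum.
  rewrite (set_ext _ _ (union_new_part Bn)) in Hsum.
  apply (cv_le_bound _ _ _ Hsum); intro n.
  enough (Hpart : sum_f_R0 (fun k => mu (new_part Bn k)) n = mu (union_upto Bn n))
    by (rewrite Hpart; apply Hc).
  induction n as [|n IH]; [reflexivity|].
  simpl sum_f_R0; rewrite IH, union_upto_split, measure_add2; auto using borel_union_upto.
  intros x Hx [_ Hnot]; exact (Hnot Hx).
Qed.

Lemma measure_null_union (Bn : nat -> Y -> Prop) :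
  (forall k, borel d (Bn k)) -> (forall k, mu (Bn k) <= 0) -> mu (fun x => exists n, Bn n x) <= 0.
Proof.
  intros HB H0; apply measure_union_bound; auto.
  induction n as [|n IH]; [apply H0|].
  pose proof (measure_subadd2 _ _ (borel_union_upto Bn n HB) (HB (S n))); specialize (H0 (S n)).
  simpl; lra.
Qed.

Lemma positive_piece (S : Y -> Prop) (An : nat -> Y -> Prop) :
  borel d S -> (forall n, borel d (An n)) -> 0 < mu S ->
  (forall x, S x -> exists n, An n x) -> exists n, 0 < mu (fun x => S x /\ An n x).
Proof.
  intros HS HA Hpos Hcover; apply NNPP; intro Hnone.
  assert (Hnull : mu (fun x => exists n, S x /\ An n x) <= 0).
  { apply measure_null_union; [intro; apply borel_and; auto|].
    intro n; apply Rnot_lt_le; intro; apply Hnone; eauto. }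
  assert (Hle : mu S <= mu (fun x => exists n, S x /\ An n x)).
  { apply measure_mono; auto; [apply borel_union; intro; apply borel_and; auto|].
    intros x Hx; destruct (Hcover x Hx) as [n Hn]; eauto. }
  lra.
Qed.

Lemma limsup_measure_ge (An : nat -> Y -> Prop) eps :
  (forall n, borel d (An n)) -> (forall n, eps <= mu (An n)) ->
  eps <= mu (fun x => forall M, exists i, (M <= i)%nat /\ An i x).
Proof.
  intros HA Heps.
  set (Tail := fun M x => exists i, (M <= i)%nat /\ An i x).
  assert (HTail : forall M, borel d (Tail M)).
  { intro M; apply borel_union; intro i; apply borel_andP, HA. }
  set (Miss := fun M x => ~ Tail M x).
  assert (HMiss : forall M, borel d (Miss M)) by (intro; apply borel_compl, HTail).
  (* the sets Miss M increase with M and Miss n excludes A_n *)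
  assert (Hbound : mu (fun x => exists M, Miss M x) <= 1 - eps).
  { apply measure_union_bound; auto; intro n.
    apply Rle_trans with (mu (fun x => ~ An n x)).
    - apply measure_mono; auto using borel_union_upto, borel_compl.
      intros x Hx HAn.
      assert (Hup : forall k, (k <= n)%nat -> Miss k x -> False).
      { intros k Hk Hm; apply Hm; exists n; split; assumption. }
      clear - Hx Hup; induction n as [|n IH]; simpl in Hx;
        [exact (Hup 0%nat (le_n _) Hx) | destruct Hx as [Hx|Hx]; eauto].
    - rewrite measure_compl by apply HA; specialize (Heps n); lra. }
  rewrite (set_ext _ (fun x => ~ exists M, Miss M x)).
  - rewrite measure_compl by (apply borel_union, HMiss); lra.
  - intro x; split; [intros H [M HM]; exact (HM (H M)) | intros H M; apply NNPP; eauto].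
Qed.

End ProbabilityMeasure.

Section Topology.
Context {Y Z : Type} (dY : Y -> Y -> R) (dZ : Z -> Z -> R).

Lemma cont_comp {W : Type} (dW : W -> W -> R) (f : Y -> Z) (g : Z -> W) :
  continuous_map dY dZ f -> continuous_map dZ dW g -> continuous_map dY dW (fun x => g (f x)).
Proof.
  intros Hf Hg x e He; destruct (Hg (f x) e He) as [r [Hr Hgr]].
  destruct (Hf x r Hr) as [s [Hs Hfs]]; exists s; split; auto.
Qed.

Lemma clopen_preim (f : Y -> Z) U :
  continuous_map dY dZ f -> is_clopen dZ U -> is_clopen dY (fun y => U (f y)).
Proof.
  assert (Hopen : forall f V, continuous_map dY dZ f -> is_open dZ V -> is_open dY (fun y => V (f y))).
  { intros g V Hg HV y Hy; destruct (HV _ Hy) as [r [Hr HVr]].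
    destruct (Hg y r Hr) as [s [Hs Hgs]]; exists s; split; auto. }
  intros Hf [HUo HUc]; split; [apply Hopen | apply (Hopen f (fun z => ~ U z))]; assumption.
Qed.

Lemma clopen_True : is_clopen dY (fun _ => True).
Proof. split; [intros x _; exists 1; split; [lra | auto] | intros x Hx; tauto]. Qed.

Lemma clopen_and A B : is_clopen dY A -> is_clopen dY B -> is_clopen dY (fun x => A x /\ B x).
Proof.
  intros [HAo HAc] [HBo HBc]; split.
  - intros x [Ha Hb]; destruct (HAo x Ha) as [r1 [Hr1 H1]]; destruct (HBo x Hb) as [r2 [Hr2 H2]].
    exists (Rmin r1 r2); split; [apply Rmin_pos; assumption|].
    intros y Hy; pose proof (Rmin_l r1 r2); pose proof (Rmin_r r1 r2); split; [apply H1 | apply H2]; lra.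
  - intros x Hx; destruct (classic (A x)) as [Ha|Ha].
    + destruct (HBc x (fun Hb => Hx (conj Ha Hb))) as [r [Hr H]].
      exists r; split; [exact Hr | intros y Hy [_ Hb]; exact (H y Hy Hb)].
    + destruct (HAc x Ha) as [r [Hr H]].
      exists r; split; [exact Hr | intros y Hy [Hy' _]; exact (H y Hy Hy')].
Qed.

Lemma clopen_borel A : is_clopen dY A -> borel dY A.
Proof. intros [HA _]; apply borel_open, HA. Qed.

(* The indicator of a clopen set is locally constant, hence continuous. *)
Lemma ind_continuous G : is_clopen dY G -> continuous_map dY dR (Defs.ind G).
Proof.
  intros [HGo HGc] x e He; unfold Defs.ind.
  destruct (excluded_middle_informative (G x)) as [Hx|Hx];
    [destruct (HGo x Hx) as [r [Hr H]] | destruct (HGc x Hx) as [r [Hr H]]];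
    exists r; split; auto; intros y Hy; specialize (H y Hy);
    destruct (excluded_middle_informative (G y)); try tauto;
    unfold dR; rewrite Rminus_diag, Rabs_R0; exact He.
Qed.

End Topology.

Lemma ind_range {Y : Type} (G : Y -> Prop) x : 0 <= Defs.ind G x <= 1.
Proof. unfold Defs.ind; destruct (excluded_middle_informative (G x)); lra. Qed.

Lemma ind_one {Y : Type} (G : Y -> Prop) x : G x -> Defs.ind G x = 1.
Proof. unfold Defs.ind; destruct (excluded_middle_informative (G x)); tauto. Qed.

Section IndicatorIntegral.
Context {Y : Type} (d : Y -> Y -> R) (mu : (Y -> Prop) -> R).
Hypothesis Hmu : borel_prob_measure d mu.

(* A simple function with nonnegative coefficients that vanishes everywhere has
   nonpositive integral: each term with a positive coefficient lives on an empty set. *)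
Lemma simple_sum_nonpos (l : list (R * (Y -> Prop))) :
  Forall (fun p => 0 <= fst p /\ borel d (snd p)) l ->
  (forall x, fold_right (fun p acc => fst p * Defs.ind (snd p) x + acc) 0 l <= 0) ->
  fold_right (fun p acc => fst p * mu (snd p) + acc) 0 l <= 0.
Proof.
  induction l as [|[c S] l IH]; simpl; intros Hl Hx; [lra|].
  inversion Hl as [|? ? [Hc HS] Hl']; subst; simpl in Hc, HS.
  assert (Hrest_nonneg : forall x, 0 <= fold_right (fun p acc => fst p * Defs.ind (snd p) x + acc) 0 l).
  { intro x; clear - Hl'; induction Hl' as [|[c' S'] l [Hc' _] _ IH']; simpl in *; [lra|].
    pose proof (ind_range S' x); nra. }
  assert (Hrest : forall x, fold_right (fun p acc => fst p * Defs.ind (snd p) x + acc) 0 l <= 0).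
  { intro x; specialize (Hx x); pose proof (ind_range S x); nra. }
  assert (Hterm : c * mu S = 0).
  { destruct (Req_dec c 0) as [->|Hc0]; [ring|].
    rewrite (set_ext S (fun _ => False)), (measure_empty d mu Hmu); [ring|].
    intro x; split; [|tauto]; intro HSx.
    specialize (Hx x); specialize (Hrest_nonneg x); rewrite ind_one in Hx by exact HSx; lra. }
  specialize (IH Hl' Hrest); lra.
Qed.

Lemma integral_ind_ge G I : borel d G -> is_integral d mu (Defs.ind G) I -> mu G <= I.
Proof.
  intros HG [p [q [[Hp _] [[_ Hq] ->]]]].
  assert (Hpos : mu G <= p).
  { apply Hp; exists ((1, G) :: nil); simpl; split; [constructor; [simpl; split; [lra | exact HG] | constructor]|].
    split; [intro x; pose proof (Rmax_l (Defs.ind G x) 0); lra | ring]. }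
  assert (Hneg : q <= 0).
  { apply Hq; intros v [l [Hl [Hx ->]]]; apply simple_sum_nonpos; auto.
    intro x; specialize (Hx x); pose proof (ind_range G x); rewrite Rmax_right in Hx by lra; exact Hx. }
  lra.
Qed.

End IndicatorIntegral.

Lemma sum_range_vanishing (g : nat -> R) K :
  (forall n, 0 <= g n <= 1) -> (forall n, (K <= n)%nat -> g n = 0) ->
  forall len s, sum_range g s len <= INR (K - s).
Proof.
  intros Hg HK; induction len as [|len IH]; intro s; unfold sum_range in *; simpl; [apply pos_INR|].
  specialize (IH (S s)); destruct (Compare_dec.le_lt_dec K s) as [Hs|Hs].
  - rewrite HK by exact Hs; replace (K - S s)%nat with (K - s)%nat in IH by lia; lra.
  - replace (K - s)%nat with (S (K - S s)) by lia; rewrite S_INR; pose proof (Hg s); lra.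
Qed.

Lemma positive_average_recurrent (g : nat -> R) (a b : nat -> nat) I :
  (forall n, 0 <= g n <= 1) -> folner a b -> 0 < I ->
  Un_cv (fun N => / INR (b N - a N) * sum_range g (a N) (b N - a N)) I ->
  forall K, exists n, (K <= n)%nat /\ g n <> 0.
Proof.
  intros Hg [_ Hlong] HI Hcv K; apply NNPP; intro Hnone.
  assert (HK : forall n, (K <= n)%nat -> g n = 0) by (intros n Hn; apply NNPP; eauto).
  (* a window longer than 2K/I carries a sum > K once its average exceeds I/2 *)
  destruct (INR_archimed (I / 2) (INR K) ltac:(lra)) as [M HM].
  destruct (Hlong (S M)) as [N0 HN0]; destruct (Hcv (I / 2) ltac:(lra)) as [N1 HN1].
  set (N := max N0 N1); specialize (HN0 N ltac:(lia)); specialize (HN1 N ltac:(lia)).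
  pose proof (sum_range_vanishing g K Hg HK (b N - a N) (a N)) as Hsum.
  assert (INR (K - a N) <= INR K) by (apply le_INR; lia).
  assert (Hlen : INR (S M) <= INR (b N - a N)) by (apply le_INR; exact HN0).
  rewrite S_INR in Hlen; pose proof (pos_INR M).
  set (L := INR (b N - a N)) in *; set (Sum := sum_range g (a N) (b N - a N)) in *.
  unfold R_dist in HN1; apply Rabs_def2 in HN1.
  assert (Sum = L * (/ L * Sum)) by (field; lra).
  assert (L * (I / 2) < L * (/ L * Sum)) by (apply Rmult_lt_compat_l; lra).
  nra.
Qed.

Lemma generic_visits {Y : Type} (dY : Y -> Y -> R) (S : Y -> Y) y mu a b G :
  borel_prob_measure dY mu -> folner a b -> generic dY S y mu a b ->
  is_clopen dY G -> 0 < mu G ->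
  forall K, exists n, (K <= n)%nat /\ G (Nat.iter n S y).
Proof.
  intros Hmu Hf Hgen HG Hpos K.
  destruct (Hgen (Defs.ind G) (ind_continuous dY G HG)) as [I [HI Hcv]].
  pose proof (integral_ind_ge dY mu Hmu G I (clopen_borel dY G HG) HI).
  destruct (positive_average_recurrent (fun n => Defs.ind G (Nat.iter n S y)) a b I
              (fun n => ind_range G _) Hf ltac:(lra) Hcv K) as [n [Hn Hind]].
  exists n; split; [exact Hn|].
  unfold Defs.ind in Hind; destruct (excluded_middle_informative (G (Nat.iter n S y))); tauto.
Qed.

Lemma cont_iter {X : Type} (d : X -> X -> R) (T : X -> X) n :
  continuous_map d d T -> continuous_map d d (Nat.iter n T).
Proof.
  intro HT; induction n as [|n IH]; [intros x e He; exists e; split; auto|].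
  exact (cont_comp d d d (Nat.iter n T) T IH HT).
Qed.

(* The projections of X x X with the max metric are 1-Lipschitz. *)
Lemma cont_fst {X : Type} (d : X -> X -> R) : continuous_map (dprod d) d (@fst X X).
Proof.
  intros p e He; exists e; split; [exact He|]; intros q Hq; unfold dprod in Hq.
  pose proof (Rmax_l (d (fst p) (fst q)) (d (snd p) (snd q))); lra.
Qed.

Lemma cont_snd {X : Type} (d : X -> X -> R) : continuous_map (dprod d) d (@snd X X).
Proof.
  intros p e He; exists e; split; [exact He|]; intros q Hq; unfold dprod in Hq.
  pose proof (Rmax_r (d (fst p) (fst q)) (d (snd p) (snd q))); lra.
Qed.

Lemma iter_Tprod {X : Type} (T : X -> X) n x y :
  Nat.iter n (Tprod T) (x, y) = (Nat.iter n T x, Nat.iter n T y).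
Proof. induction n as [|n IH]; simpl; [reflexivity | rewrite IH; reflexivity]. Qed.

Lemma iter_limit_open {X : Type} (d : X -> X -> R) (T : X -> X) (y : nat -> X) x1 U
  (cs : list nat) :
  is_metric d -> continuous_map d d T -> is_open d U -> converges d y x1 ->
  (forall c, In c cs -> U (Nat.iter c T x1)) ->
  exists M, forall i, (M <= i)%nat -> forall c, In c cs -> U (Nat.iter c T (y i)).
Proof.
  intros [_ [_ [Hsym _]]] HT HU Hcv; induction cs as [|c cs IH]; intro Hcs.
  - exists 0%nat; intros i _ c [].
  - destruct IH as [M1 HM1]; [intros; apply Hcs; right; assumption|].
    destruct (HU _ (Hcs c (or_introl eq_refl))) as [r [Hr Hball]].
    destruct (cont_iter d T c HT x1 r Hr) as [s [Hs Hcont]].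
    destruct (Hcv s Hs) as [M2 HM2].
    exists (max M1 M2); intros i Hi c' [<-|Hc'].
    + apply Hball, Hcont; rewrite Hsym; apply HM2; lia.
    + apply HM1; [lia | exact Hc'].
Qed.

Section Construction.
Variables (X : Type) (d : X -> X -> R) (T : X -> X) (x0 x1 : X) (E : X -> Prop)
  (nu : (X * X -> Prop) -> R) (a b : nat -> nat) (m : nat -> nat).
Hypothesis HT : tds d T.
Hypothesis HE : is_clopen d E.
Hypothesis Hnu : borel_prob_measure (dprod d) nu.
Hypothesis Hfol : folner a b.
Hypothesis Hgen : generic (dprod d) (Tprod T) (x0, x1) nu a b.
Hypothesis Hm : forall M, exists i0, forall i, (i0 <= i)%nat -> (M <= m i)%nat.
Hypothesis Hcv : converges d (fun i => Nat.iter (m i) T x0) x1.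

Definition return_pair (i : nat) (p : X * X) : Prop :=
  E (Nat.iter (m i) T (fst p)) /\ E (snd p).

Definition frequent_return (p : X * X) : Prop :=
  forall M, exists i, (M <= i)%nat /\ return_pair i p.

Lemma return_pair_clopen i : is_clopen (dprod d) (return_pair i).
Proof.
  destruct HT as [_ [_ [HTc _]]]; apply clopen_and.
  - apply (clopen_preim (dprod d) d (fun p => Nat.iter (m i) T (fst p))); [|exact HE].
    apply cont_comp with (dZ := d); [apply cont_fst | apply cont_iter, HTc].
  - apply (clopen_preim (dprod d) d snd); [apply cont_snd | exact HE].
Qed.

Lemma frequent_return_borel : borel (dprod d) frequent_return.
Proof.
  apply borel_inter; intro M; apply borel_union; intro i.
  apply borel_andP, clopen_borel, return_pair_clopen.
Qed.

(* A finite list L of pairs (b, c) is admissible when the b's are among the m_i,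
   T^c x1 lies in E, all sums b + c' lie in A, and some clopen set G, still
   meeting the frequent returns in positive measure, satisfies T^b G_1 in E for
   every b of L: G records the constraints that future c's must respect. *)
Definition admissible (L : list (nat * nat)) : Prop :=
  exists G, is_clopen (dprod d) G /\ 0 < nu (fun p => G p /\ frequent_return p) /\
    (forall p, G p -> forall bc, In bc L -> E (Nat.iter (fst bc) T (fst p))) /\
    (forall bc, In bc L -> (exists i, fst bc = m i) /\ E (Nat.iter (snd bc) T x1)) /\
    (forall bc bc', In bc L -> In bc' L -> E (Nat.iter (fst bc + snd bc') T x0)).

Lemma admissible_nil eps : 0 < eps -> (forall i, eps <= nu (return_pair i)) -> admissible nil.
Proof.
  intros Heps Hi; exists (fun _ => True); split; [apply clopen_True|].
  split; [|repeat split; intros; contradiction].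
  rewrite (set_ext (fun p => True /\ frequent_return p) frequent_return) by (intro; tauto).
  apply Rlt_le_trans with eps; [exact Heps|].
  exact (limsup_measure_ge (dprod d) nu Hnu return_pair eps
           (fun i => clopen_borel _ _ (return_pair_clopen i)) Hi).
Qed.

Lemma next_return_index G (cs : list nat) K :
  borel (dprod d) G -> 0 < nu (fun p => G p /\ frequent_return p) ->
  (forall c, In c cs -> E (Nat.iter c T x1)) ->
  exists i, (K <= m i)%nat /\
    0 < nu (fun p => (G p /\ return_pair i p) /\ frequent_return p) /\
    (forall c, In c cs -> E (Nat.iter (m i + c) T x0)).
Proof.
  intros HG Hpos Hcs.
  destruct HT as [Hmetric [_ [HTc _]]].
  destruct (iter_limit_open d T _ x1 E cs Hmetric HTc (proj1 HE) Hcv Hcs) as [M1 HM1].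
  destruct (Hm K) as [M2 HM2]; set (M := max M1 M2).
  destruct (positive_piece (dprod d) nu Hnu (fun p => G p /\ frequent_return p)
              (fun k => return_pair (k + M))) as [k Hk].
  - apply borel_and; [exact HG | exact frequent_return_borel].
  - intro k; apply clopen_borel, return_pair_clopen.
  - exact Hpos.
  - intros p [_ Hfreq]; destruct (Hfreq M) as [i [Hi Hret]].
    exists (i - M)%nat; replace (i - M + M)%nat with i by lia; exact Hret.
  - exists (k + M)%nat; split; [apply HM2; lia|split].
    + rewrite (set_ext (fun p => (G p /\ return_pair (k + M) p) /\ frequent_return p)
                       (fun p => (G p /\ frequent_return p) /\ return_pair (k + M) p))
        by (intro; tauto); exact Hk.
    + intros c Hc; rewrite Nat.add_comm, Nat.iter_add; apply HM1; [lia | exact Hc].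
Qed.

Lemma admissible_extend L K :
  admissible L -> exists bc, ((K <= fst bc)%nat /\ (K <= snd bc)%nat) /\ admissible (bc :: L).
Proof.
  intros [G [HG [Hpos [HGb [Hpairs Hsums]]]]].
  destruct (next_return_index G (map snd L) K (clopen_borel _ _ HG) Hpos) as [i [Hi [Hpos' Hnew]]].
  { intros c Hc; apply in_map_iff in Hc; destruct Hc as [bc [<- Hbc]]; exact (proj2 (Hpairs bc Hbc)). }
  set (G' := fun p => G p /\ return_pair i p).
  assert (HG' : is_clopen (dprod d) G') by (apply clopen_and; [exact HG | apply return_pair_clopen]).
  destruct (generic_visits (dprod d) (Tprod T) (x0, x1) nu a b G' Hnu Hfol Hgen HG') with K
    as [c [Hc HGc]].
  { apply Rlt_le_trans with (1 := Hpos').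
    apply measure_mono with (d := dprod d); [exact Hnu | | apply clopen_borel, HG' | intros p Hp; apply Hp].
    apply borel_and; [apply clopen_borel, HG' | exact frequent_return_borel]. }
  rewrite iter_Tprod in HGc; destruct HGc as [HGc [HEc0 HEc1]]; simpl in HEc0, HEc1.
  exists (m i, c); split; [split; [exact Hi | exact Hc]|].
  exists G'; split; [exact HG'|]; split; [exact Hpos'|]; split; [|split].
  - intros p [Hp Hret] bc [<-|Hbc]; [exact (proj1 Hret) | exact (HGb p Hp bc Hbc)].
  - intros bc [<-|Hbc]; [split; [exists i; reflexivity | exact HEc1] | exact (Hpairs bc Hbc)].
  - intros bc bc' [<-|Hbc] [<-|Hbc']; simpl.
    + rewrite Nat.iter_add; exact HEc0.
    + apply Hnew, in_map; exact Hbc'.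
    + rewrite Nat.iter_add; exact (HGb _ HGc bc Hbc).
    + exact (Hsums bc bc' Hbc Hbc').
Qed.

End Construction.

(* The first n terms of a sequence, most recent first. *)
Fixpoint prefix {A : Type} (u : nat -> A) (n : nat) : list A :=
  match n with 0%nat => nil | S k => u k :: prefix u k end.

Lemma prefix_In {A : Type} (u : nat -> A) j n : (j < n)%nat -> In (u j) (prefix u n).
Proof.
  induction n as [|n IH]; simpl; intro Hj; [lia|].
  destruct (Nat.eq_dec j n) as [->|Hne]; [left; reflexivity | right; apply IH; lia].
Qed.

Lemma list_dependent_choice {A : Type} (P : list A -> Prop) (Q : nat -> A -> Prop) :
  P nil -> (forall L K, P L -> exists x, Q K x /\ P (x :: L)) ->
  exists u : nat -> A, (forall n, Q n (u n)) /\ (forall n, P (prefix u n)).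
Proof.
  intros Hnil Hstep.
  assert (Hinh : inhabited A) by (destruct (Hstep nil 0%nat Hnil) as [x _]; exact (inhabits x)).
  set (next := fun L K => epsilon Hinh (fun x => Q K x /\ P (x :: L))).
  assert (Hnext : forall L K, P L -> Q K (next L K) /\ P (next L K :: L))
    by (intros L K HL; exact (epsilon_spec Hinh _ (Hstep L K HL))).
  set (chain := fix chain n := match n with 0%nat => nil | S k => next (chain k) k :: chain k end).
  assert (Hchain : forall n, P (chain n)).
  { induction n as [|n IH]; [exact Hnil | exact (proj2 (Hnext _ _ IH))]. }
  assert (Hprefix : forall n, prefix (fun k => next (chain k) k) n = chain n).
  { induction n as [|n IH]; simpl; [reflexivity | rewrite IH; reflexivity]. }
  exists (fun n => next (chain n) n); split; intro n.
  - exact (proj1 (Hnext _ _ (Hchain n))).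
  - rewrite Hprefix; apply Hchain.
Qed.

Theorem theorem2 (X : Type) (d : X -> X -> R) (T : X -> X) (x0 x1 : X)
  (E : X -> Prop) (nu : (X * X -> Prop) -> R) (a b : nat -> nat)
  (eps : R) (m : nat -> nat) :
  tds d T ->
  is_clopen d E ->
  borel_prob_measure (dprod d) nu ->
  folner a b ->
  generic (dprod d) (Tprod T) (x0, x1) nu a b ->
  0 < eps ->
  (forall M, exists i0, forall i, (i0 <= i)%nat -> (M <= m i)%nat) ->
  converges d (fun i => Nat.iter (m i) T x0) x1 ->
  (forall i, eps <= nu (fun p => E (Nat.iter (m i) T (fst p)) /\ E (snd p))) ->
  exists B C : nat -> Prop,
    (forall n, exists k, (n <= k)%nat /\ B k) /\
    (forall n, exists k, (n <= k)%nat /\ C k) /\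
    (forall k l, B k -> C l -> E (Nat.iter (k + l) T x0)) /\
    (forall k, B k -> exists i, k = m i) /\
    (forall l, C l -> E (Nat.iter l T x1)).
Proof.
  intros HT HE Hnu Hfol Hgen Heps Hm Hcv Hret.
  destruct (list_dependent_choice (admissible X d T x0 x1 E nu m)
              (fun K bc => (K <= fst bc)%nat /\ (K <= snd bc)%nat)
              (admissible_nil X d T x0 x1 E nu m HT HE Hnu eps Heps Hret)
              (fun L K => admissible_extend X d T x0 x1 E nu a b m HT HE Hnu Hfol Hgen Hm Hcv L K))
    as [u [Hbig Hadm]].
  exists (fun k => exists n, k = fst (u n)), (fun l => exists n, l = snd (u n)).
  split; [|split; [|split; [|split]]].
  - intro n; exists (fst (u n)); split; [apply Hbig | eauto].
  - intro n; exists (snd (u n)); split; [apply Hbig | eauto].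
  - (* any two chosen pairs occur together in a long enough admissible prefix *)
    intros k l [n1 ->] [n2 ->].
    destruct (Hadm (S (max n1 n2))) as [G [_ [_ [_ [_ Hsums]]]]].
    apply Hsums; apply prefix_In; lia.
  - intros k [n ->]; destruct (Hadm (S n)) as [G [_ [_ [_ [Hpairs _]]]]].
    exact (proj1 (Hpairs _ (prefix_In u n (S n) (le_n _)))).
  - intros l [n ->]; destruct (Hadm (S n)) as [G [_ [_ [_ [Hpairs _]]]]].
    exact (proj2 (Hpairs _ (prefix_In u n (S n) (le_n _)))).
Qed.
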